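(* Let $P$ be a non-symmetric operad of sets and let $\overline{P}$ be its reverse. Let $(S,\mu,\eta)$ and $(\overline{S},\overline{\mu},\overline{\eta})$ be the monads on $\mathbf{Set}$ induced by $P$ and $\overline{P}$ respectively. Then $\overline{P}$ is a non-symmetric operad, and the maps $\iota_X:SX\to\overline{S}X$, $(\theta,x_1,\dots,x_n)\mapsto(\theta,x_n,\dots,x_1)$ (for $n\in\mathbb{N}$, $\theta\in P(n)$, $x_i\in X$), form an isomorphism of monads $\iota:(S,\mu,\eta)\to(\overline{S},\overline{\mu},\overline{\eta})$. In particular the monads induced by $P$ and $\overline{P}$ are isomorphic.
   Context: A non-symmetric operad of sets $P$ consists of sets $P(n)$ ($n\in\mathbb{N}$), an identity $1\in P(1)$, and associative, unital compositions $P(n)\times P(k_1)\times\cdots\times P(k_n)\to P(k_1+\cdots+k_n)$, written $\theta\circ(\theta_1,\dots,\theta_n)$. The reverse $\overline{P}$ of $P$ has $\overline{P}(n)=P(n)$, the same identity, and composition $\theta\circ_{\mathrm{rev}}(\theta_1,\dots,\theta_n)=\theta\circ(\theta_n,\dots,\theta_1)$. The monad $(S,\mu,\eta)$ induced by an operad $P$: $SX=\sum_{n\in\mathbb{N}}P(n)\times X^n$, $\eta_X(x)=(1,x)$, and $\mu_X$ sends $(\theta,(\theta_1,x_1^1,\dots,x_1^{k_1}),\dots,(\theta_n,x_n^1,\dots,x_n^{k_n}))$ to $(\theta\circ(\theta_1,\dots,\theta_n),x_1^1,\dots,x_1^{k_1},\dots,x_n^1,\dots,x_n^{k_n})$. An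 isomorphism of monads $\iota:(S,\mu,\eta)\to(S',\mu',\eta')$ is a natural isomorphism $\iota:S\to S'$ with $\iota_X\eta_X=\eta'_X$ and $\iota_X\circ\mu_X=\mu'_X\circ\iota_{S'X}\circ S\iota_X$ for every set $X$. *)

From mathcomp Require Import all_boot.
Set Implicit Arguments. Unset Strict Implicit. Unset Printing Implicit Defensive.

(* The composition theta o (theta_1,...,theta_n) takes theta : P n and the  *)
(* list [theta_1;...;theta_n] of operations; its typing constraint (the     *)
(* result lies in P (k_1+...+k_n)) is recorded as [ocomp_arity].  Values on *)
(* lists of the wrong length are irrelevant junk and never used.            *)
Record opdata := OpData {
  P : nat -> Type;
  oid : P 1;
  ocomp : forall n, P n -> seq {k & P k} -> {k & P k};
  ocomp_arity : forall n (t : P n) (ts : seq {k & P k}),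
      size ts = n -> tag (ocomp t ts) = sumn (map (fun u => tag u) ts)
}.

Notation Op D := {k : nat & P D k}.

Definition opunit (D : opdata) : Op D := existT (P D) 1 (oid D).

Definition is_operad (D : opdata) : Prop :=
  (forall t : Op D, ocomp (oid D) [:: t] = t) /\
  (forall n (t : P D n), ocomp t (nseq n (opunit D)) = existT (P D) n t) /\
  (forall n (t : P D n) (ts : seq (Op D)) (tss : seq (seq (Op D))),
      size ts = n ->
      all2 (fun u us => size us == tag u) ts tss ->
      ocomp (tagged (ocomp t ts)) (flatten tss)
      = ocomp t [seq ocomp (tagged p.1) p.2 | p <- zip ts tss]).

Lemma revOp_arity (D : opdata) n (t : P D n) (ts : seq (Op D)) :
  size ts = n -> tag (ocomp t (rev ts)) = sumn (map (fun u => tag u) ts).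
Proof.
move=> hs; rewrite ocomp_arity ?size_rev // map_rev.
elim: ts {hs} => [|a s IH] //=; rewrite rev_cons -cats1.
by rewrite sumn_cat /= IH addn0 addnC.
Qed.

Definition revOp (D : opdata) : opdata :=
  @OpData (P D) (oid D) (fun n t ts => ocomp t (rev ts)) (@revOp_arity D).

(* The monad on Set (here: Type) induced by an operad:                      *)
(*   S X = sum_n P(n) x X^n,  eta x = (1, x),                              *)
(*   mu (theta, (theta_1, xs_1), ..., (theta_n, xs_n))                     *)
(*      = (theta o (theta_1,...,theta_n), xs_1 ++ ... ++ xs_n).            *)
Definition Smon (D : opdata) (X : Type) : Type := {t : Op D & (tag t).-tuple X}.

Definition Smap (D : opdata) (X Y : Type) (f : X -> Y) (z : Smon D X) : Smon D Y :=
  existT (fun t : Op D => (tag t).-tuple Y) (tag z) (map_tuple f (tagged z)).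

Definition Seta (D : opdata) (X : Type) (x : X) : Smon D X :=
  existT (fun t : Op D => (tag t).-tuple X) (opunit D) [tuple x].

Lemma Smu_size (D : opdata) (X : Type) (z : Smon D (Smon D X)) :
  size (flatten [seq val (tagged y) | y : Smon D X <- val (tagged z)])
  == tag (ocomp (tagged (tag z)) [seq tag y | y : Smon D X <- val (tagged z)]).
Proof.
rewrite ocomp_arity; last by rewrite size_map size_tuple.
rewrite size_flatten /shape -!map_comp; apply/eqP; congr sumn.
by apply: eq_map => y /=; rewrite size_tuple.
Qed.

Definition Smu (D : opdata) (X : Type) (z : Smon D (Smon D X)) : Smon D X :=
  existT (fun t : Op D => (tag t).-tuple X)
    (ocomp (tagged (tag z)) [seq tag y | y : Smon D X <- val (tagged z)])
    (Tuple (Smu_size z)).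

Definition rev_iota (D : opdata) (X : Type) (z : Smon D X) : Smon (revOp D) X :=
  existT (fun t : Op (revOp D) => (tag t).-tuple X) (tag z) (rev_tuple (tagged z)).

Definition is_monad_iso
  (S S' : Type -> Type)
  (Sm : forall X Y, (X -> Y) -> S X -> S Y)
  (S'm : forall X Y, (X -> Y) -> S' X -> S' Y)
  (eta : forall X, X -> S X) (eta' : forall X, X -> S' X)
  (mu : forall X, S (S X) -> S X) (mu' : forall X, S' (S' X) -> S' X)
  (i : forall X, S X -> S' X) : Prop :=
  (forall X Y (f : X -> Y) (z : S X), i Y (Sm X Y f z) = S'm X Y f (i X z)) /\
  (forall X, bijective (i X)) /\
  (forall X (x : X), i X (eta X x) = eta' X x) /\
  (forall X (z : S (S X)),
      i X (mu X z) = mu' X (i (S' X) (Sm (S X) (S' X) (i X) z))).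

From mathcomp Require Import all_boot.

Set Implicit Arguments.
Unset Strict Implicit.
Unset Printing Implicit Defensive.

(* List reversal is an involution with rev (flatten ss) = flatten (rev (map rev ss)).
   Applied to the family of inputs, it turns each operad law of P into the
   corresponding law of the reverse operad.  The map iota only reverses the
   tuple of arguments, so it is natural, fixes the units, and is inverted by
   the iota of the reverse operad; the same flatten identity makes it commute
   with the multiplications. *)

Lemma all2_size (S T : Type) (r : S -> T -> bool) (s : seq S) (t : seq T) :
  all2 r s t -> size s = size t.
Proof. by rewrite all2E => /andP[/eqP]. Qed.

Lemma all2_rev (S T : Type) (r : S -> T -> bool) (s : seq S) (t : seq T) :
  all2 r (rev s) (rev t) = all2 r s t.
Proof.
by rewrite !all2E !size_rev; case: eqP => // /rev_zip <-; rewrite all_rev.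
Qed.

Lemma eq_all2 (S T : Type) (r1 r2 : S -> T -> bool) :
  r1 =2 r2 -> all2 r1 =2 all2 r2.
Proof.
by move=> eq_r s t; elim: s t => [|x s IH] [|y t] //=; rewrite eq_r IH.
Qed.

Lemma all2_mapr (S T U : Type) (r : S -> U -> bool) (f : T -> U)
    (s : seq S) (t : seq T) :
  all2 r s (map f t) = all2 (fun x y => r x (f y)) s t.
Proof. by elim: s t => [|x s IH] [|y t] //=; rewrite IH. Qed.

Lemma zip_mapr (S T U : Type) (f : T -> U) (s : seq S) (t : seq T) :
  zip s (map f t) = [seq (p.1, f p.2) | p <- zip s t].
Proof. by elim: s t => [|x s IH] [|y t] //=; rewrite IH. Qed.

Lemma eq_Smon (D : opdata) (X : Type) (a b : Op D) (xa : (tag a).-tuple X)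
    (xb : (tag b).-tuple X) :
  a = b -> val xa = val xb ->
  existT (fun t : Op D => (tag t).-tuple X) a xa = existT _ b xb.
Proof. by move=> eq_ab; subst b => eq_x; congr existT; apply: val_inj. Qed.

Section ReverseOperad.

Variable D : opdata.

Lemma revOp_assoc n (t : P D n) (ts : seq (Op D)) (tss : seq (seq (Op D))) :
    is_operad D -> size ts = n ->
    all2 (fun u us => size us == tag u) ts tss ->
  ocomp (tagged (@ocomp (revOp D) _ t ts)) (flatten tss)
  = @ocomp (revOp D) _ t
      [seq @ocomp (revOp D) _ (tagged p.1) p.2 | p <- zip ts tss].
Proof.
move=> [_ [_ assocD]] size_ts arity_tss /=.
have arity_rev : all2 (fun u us => size us == tag u) (rev ts) (rev (map rev tss)).
  rewrite all2_rev all2_mapr.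
  by rewrite (eq_all2 (r2 := fun u us => size us == tag u)) // => u us; rewrite size_rev.
rewrite rev_flatten assocD ?size_rev //.
by rewrite -rev_zip ?size_map ?(all2_size arity_tss) // zip_mapr map_rev -map_comp.
Qed.

Lemma is_operad_revOp : is_operad D -> is_operad (revOp D).
Proof.
move=> opD; have [unitlD [unitrD _]] := opD.
split=> [t | ]; first exact: unitlD.
split=> [n t | n t ts tss]; first by rewrite /= rev_nseq unitrD.
exact: revOp_assoc.
Qed.

Lemma rev_iota_natural (X Y : Type) (f : X -> Y) (z : Smon D X) :
  rev_iota (Smap f z) = Smap (D := revOp D) f (rev_iota z).
Proof. by apply: eq_Smon; rewrite //= map_rev. Qed.

(* The reverse operad has the same sets P n, so its iota maps back to [Smon D X]. *)
Lemma rev_iotaK (X : Type) : cancel (@rev_iota D X) (@rev_iota (revOp D) X).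
Proof. by case=> a xs; apply: eq_Smon => //; apply: revK. Qed.

Lemma rev_iota_eta (X : Type) (x : X) : rev_iota (Seta D x) = Seta (revOp D) x.
Proof. exact: eq_Smon. Qed.

Lemma rev_iota_mu (X : Type) (z : Smon D (Smon D X)) :
  rev_iota (Smu z)
  = Smu (D := revOp D) (rev_iota (Smap (@rev_iota D X) z)).
Proof.
apply: eq_Smon => /=.
  by congr ocomp; rewrite map_rev revK -map_comp.
by rewrite rev_flatten map_rev -!map_comp.
Qed.

End ReverseOperad.

Theorem mainTheorem2 (D : opdata) :
  is_operad D ->
  is_operad (revOp D) /\
  is_monad_iso (@Smap D) (@Smap (revOp D))
    (@Seta D) (@Seta (revOp D)) (@Smu D) (@Smu (revOp D)) (@rev_iota D).
Proof.
move=> opD; split; first exact: is_operad_revOp.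
split; first exact: rev_iota_natural.
split; first by move=> X; exists (@rev_iota (revOp D) X); apply: rev_iotaK.
split; first exact: rev_iota_eta.
exact: rev_iota_mu.
Qed.
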